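(* Let $S_5\subseteq G^5$ be the stabilizer group generated by $g_1=X\otimes Z\otimes Z\otimes X\otimes I$, $g_2=I\otimes X\otimes Z\otimes Z\otimes X$, $g_3=X\otimes I\otimes X\otimes Z\otimes Z$, $g_4=Z\otimes X\otimes I\otimes X\otimes Z$. Each $\epsilon\in\mathbb{F}_2^4$ is the syndrome of exactly one element of $\{I^{\otimes5}\}\cup\{\text{single-qubit }X,Y,Z\text{ errors}\}$ (16 elements); let $\phi(\epsilon)$ be that element. Then, with this $\phi$, $f_{S_5}(0)=f_{S_5}(1)=1$, $f_{S_5}(2)=\tfrac{7}{16}$, and $f_{S_5}(t)=0$ for $t=3,4,5$.
   Context: $X=\begin{pmatrix}0&1\\1&0\end{pmatrix}$, $Y=\begin{pmatrix}0&1\\-1&0\end{pmatrix}$, $Z=\begin{pmatrix}1&0\\0&-1\end{pmatrix}$. For a stabilizer group $S\subseteq G^n$ (abelian subgroup of the $n$-qubit Pauli group not containing $-I$) with independent generators $g_1,\dots,g_r$, the syndrome of a Pauli operator $g$ is $\epsilon(g)\in\mathbb{F}_2^r$, $\epsilon_i(g)=0$ if $g$ commutes with $g_i$ and $1$ if it anticommutes. For $\{m\}\subseteq\{1,\dots,n\}$, $P^{\{m\}}$ is the set of tensor products that are one of $I,X,Y,Z$ on each qubit of $\{m\}$ and $I$ elsewhere. Given an error correcting function $\phi:\mathbb{F}_2^r\to G^n$, call a syndrome $\epsilon\in\Sigma_{\{m\}}:=\{\epsilon(g):g\in P^{\{m\}}\}$ good for $\{m\}$ if $\phi(\epsilon)g\in\{\lambda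 s:s\in S,\lambda\in\{\pm1,\pm i\}\}$ for every $g\in P^{\{m\}}$ with $\epsilon(g)=\epsilon$. Define, for $t=0,\dots,n$, $$f_S(t)=\binom{n}{t}^{-1}\sum_{|\{m\}|=t}\frac{|\{\epsilon\in\Sigma_{\{m\}}:\epsilon\text{ good for }\{m\}\}|}{|\Sigma_{\{m\}}|},$$ the sum over all $t$-element subsets $\{m\}$; this is the probability that a random error affecting $t$ randomly located qubits is corrected. *)

From HB Require Import structures.
From mathcomp Require Import all_boot all_order all_algebra.
Set Implicit Arguments. Unset Strict Implicit. Unset Printing Implicit Defensive.
Import GRing.Theory.
Local Open Scope ring_scope.

Inductive letter := PI | PX | PY | PZ.

Definition letter_to (a : letter) : 'I_4 :=
  match a with PI => inord 0 | PX => inord 1 | PY => inord 2 | PZ => inord 3 end.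
Definition letter_of (k : 'I_4) : letter :=
  match val k with 0 => PI | 1 => PX | 2 => PY | _ => PZ end.
Lemma letter_toK : cancel letter_to letter_of.
Proof. by case; rewrite /letter_of /= inordK. Qed.
HB.instance Definition _ := Finite.copy letter (can_type letter_toK).

(* The paper's 2x2 matrices (all entries are integers; note Y = [[0,1],[-1,0]]). *)
Definition letter_mx (a : letter) : 'M[int]_2 :=
  \matrix_(i < 2, j < 2)
   match a with
   | PI => if i == j then 1 else 0
   | PX => if i == j then 0 else 1
   | PY => if i == j then 0 else (if val i == 0%N then 1 else -1)
   | PZ => if i == j then (if val i == 0%N then 1 else -1) else 0
   end.

(* Product of letters: a * b = i^k c, returned as (k, c) with k in Z/4.
   Computed from the matrices above: XX=ZZ=I, YY=-I, XY=-Z, YX=Z,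
   XZ=-Y, ZX=Y, YZ=-X, ZY=X. *)
Definition lmul (a b : letter) : 'Z_4 * letter :=
  match a, b with
  | PI, c | c, PI => (0, c)
  | PX, PX => (0, PI) | PZ, PZ => (0, PI) | PY, PY => (2%:R, PI)
  | PX, PY => (2%:R, PZ) | PY, PX => (0, PZ)
  | PX, PZ => (2%:R, PY) | PZ, PX => (0, PY)
  | PY, PZ => (2%:R, PX) | PZ, PY => (0, PX)
  end.

Lemma lmul_spec a b :
  letter_mx a *m letter_mx b =
  (if (lmul a b).1 == 0 then 1 else -1) *: letter_mx (lmul a b).2.
Proof.
by case: a; case: b; apply/matrixP => i j; rewrite !mxE !big_ord_recl big_ord0 !mxE;
  case: i => [[|[|//]] Hi]; case: j => [[|[|//]] Hj]; rewrite /= ?mulr1 ?mulr0.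
Qed.

(* An element of the n-qubit Pauli group G^n: i^k * (w_0 (x) ... (x) w_{n-1}). *)
Definition pauli n := ('Z_4 * {ffun 'I_n -> letter})%type.

Definition pmul n (g h : pauli n) : pauli n :=
  (g.1 + h.1 + \sum_(j < n) (lmul (g.2 j) (h.2 j)).1,
   [ffun j => (lmul (g.2 j) (h.2 j)).2]).

Definition pone n : pauli n := (0, [ffun=> PI]).
Definition pscale n (k : 'Z_4) (g : pauli n) : pauli n := (k + g.1, g.2).

Definition pcommute n (g h : pauli n) : bool := pmul g h == pmul h g.

(* The subgroup of G^n generated by the generators gens (G^n is finite, so
   the smallest submonoid containing gens is the generated subgroup). *)
Definition mul_closed n (A : {set pauli n}) : bool :=
  (pone n \in A) && [forall g in A, forall h in A, pmul g h \in A].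

Definition gen_group n r (gens : 'I_r -> pauli n) : {set pauli n} :=
  \bigcap_(A : {set pauli n} | mul_closed A && [forall i, gens i \in A]) A.

Definition syndrome n r (gens : 'I_r -> pauli n) (g : pauli n) : {ffun 'I_r -> bool} :=
  [ffun i => ~~ pcommute g (gens i)].

Definition Pset n (m : {set 'I_n}) : {set pauli n} :=
  [set g : pauli n | (g.1 == 0) && [forall j, (j \notin m) ==> (g.2 j == PI)]].

Definition Sigma n r (gens : 'I_r -> pauli n) (m : {set 'I_n}) : {set {ffun 'I_r -> bool}} :=
  [set syndrome gens g | g in Pset m].

Definition in_S_up_to_phase n r (gens : 'I_r -> pauli n) (x : pauli n) : bool :=
  [exists k : 'Z_4, exists s in gen_group gens, x == pscale k s].

Definition good n r (gens : 'I_r -> pauli n) (phi : {ffun 'I_r -> bool} -> pauli n)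
  (m : {set 'I_n}) (e : {ffun 'I_r -> bool}) : bool :=
  (e \in Sigma gens m) &&
  [forall g in Pset m, (syndrome gens g == e) ==> in_S_up_to_phase gens (pmul (phi e) g)].

Definition fS n r (gens : 'I_r -> pauli n) (phi : {ffun 'I_r -> bool} -> pauli n)
  (t : nat) : rat :=
  (\sum_(m : {set 'I_n} | #|m| == t)
      (#|[set e in Sigma gens m | good gens phi m e]|%:R / #|Sigma gens m|%:R))
  / 'C(n, t)%:R.

Definition word5 (a0 a1 a2 a3 a4 : letter) : {ffun 'I_5 -> letter} :=
  [ffun j : 'I_5 => nth PI [:: a0; a1; a2; a3; a4] j].

Definition gens5 (i : 'I_4) : pauli 5 :=
  (0, match val i with
      | 0 => word5 PX PZ PZ PX PI
      | 1 => word5 PI PX PZ PZ PX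
      | 2 => word5 PX PI PX PZ PZ
      | _ => word5 PZ PX PI PX PZ
      end).

Definition single n (j : 'I_n) (a : letter) : pauli n :=
  (0, [ffun k => if k == j then a else PI]).

Definition E5 : {set pauli 5} :=
  pone 5 |: [set single ja.1 ja.2 | ja : 'I_5 * letter & ja.2 != PI].

(* phi(eps) = the element of E5 with syndrome eps (identity if none) *)
Definition phi5 (e : {ffun 'I_4 -> bool}) : pauli 5 :=
  odflt (pone 5) [pick g in E5 | syndrome gens5 g == e].

From mathcomp Require Import all_boot all_order all_algebra.
Set Implicit Arguments. Unset Strict Implicit. Unset Printing Implicit Defensive.
Import GRing.Theory.
Local Open Scope ring_scope.

(* Up to phase, an n-qubit Pauli operator is a word of n bit pairs (the binary
   symplectic representation): multiplication adds words, and two operators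
   commute iff their words have even symplectic product, since each
   anticommuting qubit contributes a factor i^2 = -1.  Syndromes, membership in
   S up to phase (the word lies in the F_2-span of the generator words) and the
   goodness of a syndrome therefore depend on words only, and f_S(t) becomes a
   finite computation over words of length 5, which the kernel evaluates.  The
   five-qubit code is perfect: the 16 single-error words have pairwise distinct
   syndromes exhausting F_2^4, which yields both #|E| = 16 and the decoder phi. *)

(** * Letters as bit pairs *)

Definition bits (a : letter) : bool * bool :=
  match a with
  | PI => (false, false) | PX => (true, false) | PY => (true, true) | PZ => (false, true)
  end.

Definition of_bits (p : bool * bool) : letter :=
  match p with
  | (false, false) => PI | (true, false) => PX | (true, true) => PY | (false, true) => PZ
  end.

Lemma bitsK : cancel bits of_bits. Proof. by case. Qed.
Lemma of_bitsK : cancel of_bits bits. Proof. by case=> [[] []]. Qed.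

Lemma bits_eq0 a : (bits a == (false, false)) = (a == PI).
Proof. by rewrite -[(false, false)]/(bits PI) (can_eq bitsK). Qed.

Definition symp (p q : bool * bool) : bool := (p.1 && q.2) (+) (p.2 && q.1).

Definition padd (p q : bool * bool) : bool * bool := (p.1 (+) q.1, p.2 (+) q.2).

Lemma bits_lmul a b : bits (lmul a b).2 = padd (bits a) (bits b).
Proof. by case: a; case: b. Qed.

Lemma lmul_letterC a b : (lmul a b).2 = (lmul b a).2.
Proof. by case: a; case: b. Qed.

Lemma lmul_phaseC a b : (lmul a b).1 = (lmul b a).1 + 2%:R *+ symp (bits a) (bits b).
Proof. by case: a; case: b; apply/eqP; vm_compute. Qed.

Lemma Z4_double_eq0 (c : nat) : (2%:R *+ c == 0 :> 'Z_4) = ~~ odd c.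
Proof.
rewrite -mulr_natr -natrM -val_eqE /= val_Zp_nat // -dvdn2.
by rewrite -(dvdn_pmul2l (_ : 0 < 2)%N).
Qed.

(** * Words of Pauli operators *)

Local Notation word := (seq (bool * bool)).
Local Notation zero_word n := (nseq n (false, false)).

Definition pword n (w : {ffun 'I_n -> letter}) : word := map bits (codom w).

Definition word_ffun n (s : word) : {ffun 'I_n -> letter} :=
  [ffun i : 'I_n => nth PI (map of_bits s) i].

Definition wadd (s t : word) : word := [seq padd p.1 p.2 | p <- zip s t].

Definition wsymp (s t : word) : nat := count (fun p => symp p.1 p.2) (zip s t).

Lemma codom_ffun_inj (T : finType) (U : eqType) :
  injective (fun f : {ffun T -> U} => codom f).
Proof.
move=> f g; rewrite !codomE => /eq_in_map fg.
by apply/ffunP => x; apply: fg; rewrite mem_enum.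
Qed.

Lemma codom_nth_ffun (U : Type) (u0 : U) n (s : seq U) :
  size s = n -> codom [ffun i : 'I_n => nth u0 s i] = s.
Proof.
move=> sz; rewrite codomE; under eq_map do rewrite ffunE.
by rewrite -[RHS](mkseq_nth u0) sz /mkseq -val_enum_ord -map_comp.
Qed.

Section PauliWords.
Variable n : nat.
Implicit Types (g h : pauli n) (v w : {ffun 'I_n -> letter}).

Lemma size_pword w : size (pword w) = n.
Proof. by rewrite size_map size_codom card_ord. Qed.

Lemma pword_inj : injective (@pword n).
Proof. by move=> v w /(inj_map (can_inj bitsK)) /codom_ffun_inj. Qed.

Lemma word_ffunK s : size s = n -> pword (word_ffun n s) = s.
Proof. by move=> sz; rewrite /pword codom_nth_ffun ?size_map // (mapK of_bitsK). Qed.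

Lemma pwordK : cancel (@pword n) (word_ffun n).
Proof. by move=> w; apply: pword_inj; rewrite word_ffunK ?size_pword. Qed.

Lemma pword_pone : pword (pone n).2 = zero_word n.
Proof.
rewrite -[in RHS](size_pword (pone n).2); apply/all_pred1P/allP => p.
by rewrite /pword codomE -map_comp => /mapP[i _ ->]; rewrite /= ffunE.
Qed.

Lemma pword_pmul g h : pword (pmul g h).2 = wadd (pword g.2) (pword h.2).
Proof.
rewrite /pword /wadd !codomE -!map_comp zip_map -map_comp; apply: eq_map => i /=.
by rewrite ffunE bits_lmul.
Qed.

Lemma sum_symp v w :
  (\sum_(j < n) symp (bits (v j)) (bits (w j)) = wsymp (pword v) (pword w))%N.
Proof.
rewrite /wsymp /pword !codomE -!map_comp zip_map count_map -sum1_count.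
by rewrite [RHS]big_mkcond -big_enum; apply: eq_bigr => i _; case: symp.
Qed.

Lemma pcommuteE g h : pcommute g h = ~~ odd (wsymp (pword g.2) (pword h.2)).
Proof.
rewrite /pcommute /pmul xpair_eqE.
have -> : [ffun j => (lmul (g.2 j) (h.2 j)).2] = [ffun j => (lmul (h.2 j) (g.2 j)).2].
  by apply: eq_ffun => j; rewrite lmul_letterC.
rewrite eqxx andbT -sum_symp -Z4_double_eq0 -sumrMnr.
under eq_bigr do rewrite lmul_phaseC.
by rewrite big_split /= [g.1 + _]addrC addrA -[X in _ == X]addr0 (inj_eq (addrI _)).
Qed.

End PauliWords.

(** * The stabilizer group up to phase *)

Definition wsyndrome (ws : seq word) (s : word) : seq bool := [seq odd (wsymp s w) | w <- ws].

Fixpoint wspan n (ws : seq word) : seq word :=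
  if ws is w :: ws' then wspan n ws' ++ map (wadd w) (wspan n ws') else [:: zero_word n].

Lemma wadd0 n s : size s = n -> wadd s (zero_word n) = s.
Proof.
move<-; elim: s => //= -[x y] s IH.
by rewrite /wadd /= in IH *; rewrite IH /padd /= !addbF.
Qed.

Lemma wspan0 n ws : zero_word n \in wspan n ws.
Proof. by elim: ws => [|w ws IH] /=; rewrite ?mem_seq1 ?mem_cat ?IH. Qed.

Lemma mem_wspan n ws w : all (fun s => size s == n) ws -> w \in ws -> w \in wspan n ws.
Proof.
elim: ws => [|w' ws IH] //= /andP[/eqP sz_w' /IH {}IH]; rewrite in_cons mem_cat.
case/orP => [/eqP->|/IH->] //.
by apply/orP; right; apply/mapP; exists (zero_word n); rewrite ?wspan0 ?wadd0.
Qed.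

Lemma wspan_min n ws (P : pred word) :
  P (zero_word n) -> {subset ws <= P} -> {in P &, forall s t, P (wadd s t)} ->
  {subset wspan n ws <= P}.
Proof.
move=> P0 Pws Padd; elim: ws Pws => [|w ws IH] Pws s /=.
  by rewrite mem_seq1 => /eqP->.
have {}IH : {subset wspan n ws <= P}.
  by apply: IH => x xws; apply: Pws; rewrite in_cons xws orbT.
rewrite mem_cat => /orP[/IH // | /mapP[t /IH Pt ->]].
by apply: Padd Pt; apply: Pws; rewrite mem_head.
Qed.

Section Stabilizer.
Variables (n r : nat) (gens : 'I_r -> pauli n).

Definition gen_words : seq word := [seq pword (gens i).2 | i <- enum 'I_r].

Lemma size_gen_words : size gen_words = r.
Proof. by rewrite size_map size_enum_ord. Qed.

Lemma codom_syndrome g : codom (syndrome gens g) = wsyndrome gen_words (pword g.2).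
Proof.
rewrite codomE /wsyndrome /gen_words -map_comp; apply: eq_map => i /=.
by rewrite ffunE pcommuteE negbK.
Qed.

Lemma gen_group1 : pone n \in gen_group gens.
Proof. by apply/bigcapP => A /andP[/andP[]]. Qed.

Lemma gen_group_gen i : gens i \in gen_group gens.
Proof. by apply/bigcapP => A /andP[_ /forallP]. Qed.

Lemma gen_groupM g h :
  g \in gen_group gens -> h \in gen_group gens -> pmul g h \in gen_group gens.
Proof.
move=> /bigcapP Gg /bigcapP Gh; apply/bigcapP => A A_cl.
case/andP: (A_cl) => /andP[_ /forall_inP A_mul] _.
by have /forall_inP := A_mul g (Gg A A_cl); apply; apply: Gh.
Qed.

Lemma gen_group_min (A : {set pauli n}) :
  mul_closed A -> (forall i, gens i \in A) -> gen_group gens \subset A.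
Proof. by move=> A_mul A_gens; apply: bigcap_inf; rewrite A_mul; apply/forallP. Qed.

(* Closure of [wspan] under [wadd] holds in general; it is assumed here and
   checked by computation for the five-qubit code. *)
Hypothesis span_closed :
  {in wspan n gen_words &, forall s t, wadd s t \in wspan n gen_words}.

Lemma in_S_up_to_phaseE x : in_S_up_to_phase gens x = (pword x.2 \in wspan n gen_words).
Proof.
have sz_gens : all (fun s => size s == n) gen_words.
  by apply/allP => s /mapP[i _ ->]; rewrite size_pword.
apply/existsP/idP => [[k /existsP[s /andP[Ss /eqP->]]] | x_span].
  pose A := [set g : pauli n | pword g.2 \in wspan n gen_words].
  have /subsetP/(_ s Ss) : gen_group gens \subset A.
    apply: gen_group_min => [|i].
      rewrite /mul_closed inE pword_pone wspan0; apply/forall_inP => g; rewrite inE => Ag.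
      by apply/forall_inP => h; rewrite !inE pword_pmul => Ah; apply: span_closed.
    by rewrite inE mem_wspan //; apply: map_f; rewrite mem_enum.
  by rewrite inE.
pose P := [pred s : word | [exists g in gen_group gens, pword g.2 == s]].
have /existsP[g /andP[Gg /eqP/pword_inj gx]] : P (pword x.2).
  apply: (@wspan_min n gen_words P _ _ _ _ x_span) => [|_ /mapP[i _ ->]|s t];
    rewrite /P !inE.
  - by apply/existsP; exists (pone n); rewrite gen_group1 pword_pone eqxx.
  - by apply/existsP; exists (gens i); rewrite gen_group_gen eqxx.
  move=> /existsP[g /andP[Gg /eqP<-]] /existsP[h /andP[Gh /eqP<-]].
  by apply/existsP; exists (pmul g h); rewrite gen_groupM // pword_pmul eqxx.
exists (x.1 - g.1); apply/existsP; exists g; rewrite Gg /pscale subrK.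
by case: x gx {x_span} => ? ? /= <-; case: g Gg.
Qed.

End Stabilizer.

(** * Counting over supports *)

Fixpoint tuples (T : Type) (xs : seq T) n : seq (seq T) :=
  if n is n'.+1 then [seq x :: s | x <- xs, s <- tuples xs n'] else [:: [::]].

Lemma mem_tuples (T : eqType) (xs : seq T) n s :
  (s \in tuples xs n) = (size s == n) && all (mem xs) s.
Proof.
elim: n s => [|n IH] [|x s] //=.
  by apply/negbTE/allpairsP => -[[y t] []].
rewrite eqSS andbCA -IH; apply/allpairsP/andP => [[[y t] [yxs ts [-> ->]]] // | [xxs sn]].
by exists (x, s).
Qed.

Lemma tuples_uniq (T : eqType) (xs : seq T) n : uniq xs -> uniq (tuples xs n).
Proof.
move=> xs_uniq; elim: n => //= n IH.
by apply: allpairs_uniq => // -[x s] [y t] _ _ [-> ->].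
Qed.

Definition bit_pairs : seq (bool * bool) :=
  [:: (false, false); (true, false); (true, true); (false, true)].

Lemma mem_bit_pairs p : p \in bit_pairs. Proof. by case: p => [[] []]. Qed.

Definition set_mask n (m : {set 'I_n}) : seq bool := codom [ffun i => i \in m].

Definition supported (mk : seq bool) (s : word) : bool :=
  all (fun p => p.1 || (p.2 == (false, false))) (zip mk s).

Definition pwords n mk : seq word := [seq s <- tuples bit_pairs n | supported mk s].

Section Masks.
Variable n : nat.

Lemma card_set_mask (m : {set 'I_n}) : #|m| = count id (set_mask m).
Proof.
rewrite /set_mask codomE count_map cardE -size_filter enumT.
by congr size; apply: eq_filter => i /=; rewrite ffunE.
Qed.

Lemma set_mask_inj : injective (@set_mask n).
Proof.
move=> m m' /codom_ffun_inj/ffunP mm'; apply/setP => i.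
by have := mm' i; rewrite !ffunE.
Qed.

Lemma mem_pwords mk s : s \in pwords n mk -> size s = n.
Proof. by rewrite mem_filter mem_tuples => /and3P[_ /eqP]. Qed.

Lemma PsetE (m : {set 'I_n}) g :
  (g \in Pset m) = (g.1 == 0) && (pword g.2 \in pwords n (set_mask m)).
Proof.
rewrite inE mem_filter mem_tuples size_pword eqxx /=; congr andb.
have -> : all (mem bit_pairs) (pword g.2) by apply/allP => p _; apply: mem_bit_pairs.
rewrite andbT /supported /set_mask /pword !codomE -map_comp zip_map all_map.
apply/forallP/allP => [supp i _ | supp i]; move: (supp i); rewrite /= ffunE bits_eq0 -implyNb //.
by apply; rewrite mem_enum.
Qed.

Lemma sum_set_mask (V : nmodType) (F : seq bool -> V) t :
  \sum_(m : {set 'I_n} | #|m| == t) F (set_mask m) =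
  \sum_(mk <- tuples [:: false; true] n | count id mk == t) F mk.
Proof.
under eq_bigl do rewrite card_set_mask.
rewrite -(big_map (@set_mask n) (fun mk => count id mk == t) F).
apply: perm_big; apply: uniq_perm.
- by rewrite (map_inj_uniq set_mask_inj) index_enum_uniq.
- exact: tuples_uniq.
move=> mk; rewrite mem_tuples; apply/mapP/idP => [[m _ ->]|].
  by rewrite size_codom card_ord eqxx; apply/allP => -[].
case/andP => /eqP mk_n _; exists [set i : 'I_n | nth false mk i]; first exact: mem_index_enum.
apply/esym/(etrans _ (codom_nth_ffun false mk_n)).
by rewrite /set_mask !codomE; apply: eq_map => i; rewrite !ffunE inE.
Qed.

End Masks.

Definition syndromes n ws mk : seq (seq bool) := undup [seq wsyndrome ws s | s <- pwords n mk].

Definition good_syndrome n ws (S : seq word) (dec : seq bool -> word) mk se : bool :=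
  all (fun s => wadd (dec se) s \in S) [seq s <- pwords n mk | wsyndrome ws s == se].

Definition fS_words n ws S dec t : rat :=
  (\sum_(mk <- [seq mk <- tuples [:: false; true] n | count id mk == t])
     ((count (good_syndrome n ws S dec mk) (syndromes n ws mk))%:R
      / (size (syndromes n ws mk))%:R)) / 'C(n, t)%:R.

Lemma card_ffun_codom r (A : {set {ffun 'I_r -> bool}}) (L : seq (seq bool)) :
  uniq L -> all (fun s => size s == r) L -> (forall e, (e \in A) = (codom e \in L)) ->
  #|A| = size L.
Proof.
move=> L_uniq L_size AL.
rewrite cardE -(size_map (fun e : {ffun 'I_r -> bool} => codom e)).
apply/perm_size/uniq_perm => //.
  by rewrite (map_inj_uniq (@codom_ffun_inj _ _)) enum_uniq.
move=> s; apply/mapP/idP => [[e]|sL]; first by rewrite mem_enum AL => ? ->.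
have /eqP s_r := allP L_size s sL.
exists [ffun i : 'I_r => nth false s i]; last by rewrite codom_nth_ffun.
by rewrite mem_enum AL codom_nth_ffun.
Qed.

Section Counting.
Variables (n r : nat) (gens : 'I_r -> pauli n) (phi : {ffun 'I_r -> bool} -> pauli n).
Variable dec : seq bool -> word.
Hypothesis span_closed : {in wspan n (gen_words gens) &,
  forall s t, wadd s t \in wspan n (gen_words gens)}.
Hypothesis phiE : forall e, pword (phi e).2 = dec (codom e).

Local Notation ws := (gen_words gens).

Lemma syndrome_eqE g e : (syndrome gens g == e) = (wsyndrome ws (pword g.2) == codom e).
Proof. by rewrite -codom_syndrome (inj_eq (@codom_ffun_inj _ _)). Qed.

Lemma size_syndromes mk : all (fun se => size se == r) (syndromes n ws mk).
Proof.
apply/allP => se; rewrite mem_undup => /mapP[s _ ->].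
by rewrite size_map size_gen_words.
Qed.

Lemma SigmaE m e : (e \in Sigma gens m) = (codom e \in syndromes n ws (set_mask m)).
Proof.
rewrite mem_undup; apply/imsetP/mapP => [[g g_P ->]|[s s_P se]].
  by exists (pword g.2); [move: g_P; rewrite PsetE => /andP[] | rewrite codom_syndrome].
exists (0, word_ffun n s); first by rewrite PsetE /= word_ffunK ?eqxx // (mem_pwords s_P).
by apply/esym/eqP; rewrite syndrome_eqE /= word_ffunK ?(mem_pwords s_P) // se.
Qed.

Lemma goodE m e :
  good gens phi m e = (codom e \in syndromes n ws (set_mask m)) &&
                      good_syndrome n ws (wspan n ws) dec (set_mask m) (codom e).
Proof.
rewrite /good SigmaE; congr andb; apply/forall_inP/allP => [good_e s | good_e g].
  rewrite (mem_filter _ _ (pwords n _)) => /andP[se s_P]; have s_n := mem_pwords s_P.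
  have := good_e (0, word_ffun n s).
  rewrite PsetE /= word_ffunK // s_P syndrome_eqE /= word_ffunK // se.
  by move=> /(_ isT); rewrite in_S_up_to_phaseE // pword_pmul phiE word_ffunK.
rewrite PsetE => /andP[_ g_P]; apply/implyP; rewrite syndrome_eqE => se.
by rewrite in_S_up_to_phaseE // pword_pmul phiE good_e // (mem_filter _ _ (pwords n _)) se.
Qed.

Lemma fS_wordsE t : fS gens phi t = fS_words n ws (wspan n ws) dec t.
Proof.
rewrite /fS /fS_words big_filter -sum_set_mask; congr (_ / _).
apply: eq_bigr => m _; congr (_%:R / _%:R).
- rewrite -size_filter; apply: card_ffun_codom.
  + exact/filter_uniq/undup_uniq.
  + by apply/allP => se; rewrite mem_filter => /andP[_]; apply: (allP (size_syndromes _)).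
  + by move=> e; rewrite inE SigmaE goodE mem_filter andbA andbb andbC.
- apply: card_ffun_codom; [exact: undup_uniq | exact: size_syndromes | exact: SigmaE].
Qed.

End Counting.

(** * Single-qubit errors and the five-qubit code *)

Definition single_error_words n : seq word :=
  zero_word n :: [seq set_nth (false, false) (zero_word n) j p
                 | j <- iota 0 n, p <- [seq bits a | a <- [:: PX; PY; PZ]]].

Lemma size_single_error_words n s : s \in single_error_words n -> size s = n.
Proof.
rewrite in_cons => /orP[/eqP->|/allpairsP[[j p] [/= j_n _ ->]]]; first exact: size_nseq.
by rewrite size_set_nth size_nseq; move: j_n; rewrite mem_iota => /andP[_ /maxn_idPr].
Qed.

Lemma pword_single n (j : 'I_n) a :
  pword (single j a).2 = set_nth (false, false) (zero_word n) j (bits a).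
Proof.
apply: (@eq_from_nth _ (false, false)) => [|i]; rewrite size_pword.
  by rewrite size_set_nth size_nseq; apply/esym/maxn_idPr.
move=> i_n; rewrite /pword codomE -map_comp (nth_map j) ?size_enum_ord //.
rewrite nth_set_nth /= ffunE -val_eqE /= nth_enum_ord //.
by case: ifP => // _; rewrite nth_nseq i_n.
Qed.

Lemma mem_single_errors n g :
  (g \in pone n |: [set single ja.1 ja.2 | ja : 'I_n * letter & ja.2 != PI]) =
  (g.1 == 0) && (pword g.2 \in single_error_words n).
Proof.
rewrite in_setU1 in_cons andb_orr; congr orb.
  by case: g => k w; rewrite xpair_eqE -(inj_eq (@pword_inj n)) pword_pone.
apply/imsetP/andP => [[[j a] a_nI ->] | [/eqP g1 /allpairsP[[j p] [j_n p_XYZ gw]]]].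
  split=> //; rewrite pword_single; apply/allpairsP; exists (val j, bits a).
  split; rewrite /= ?mem_iota ?ltn_ord //.
  by move: a_nI; rewrite inE /=; case: a; rewrite ?eqxx.
move: j_n; rewrite mem_iota /= add0n => j_n.
have pI : of_bits p != PI by rewrite -bits_eq0 of_bitsK; move: p_XYZ {gw}; case: p => [[] []].
exists (Ordinal j_n, of_bits p); first by rewrite inE.
have := pword_single (Ordinal j_n) (of_bits p); rewrite of_bitsK /= -gw => /pword_inj.
by case: g g1 {gw} => k w /= -> <-.
Qed.

Definition gens5_words : seq word :=
  [seq map bits w | w <- [:: [:: PX; PZ; PZ; PX; PI]; [:: PI; PX; PZ; PZ; PX];
                            [:: PX; PI; PX; PZ; PZ]; [:: PZ; PX; PI; PX; PZ]]].

Lemma gen_words5 : gen_words gens5 = gens5_words.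
Proof. by rewrite /gen_words !enum_ordSl enum_ord0 /= /pword !codom_nth_ffun. Qed.

Lemma wspan5_closed :
  {in wspan 5 gens5_words &, forall s t, wadd s t \in wspan 5 gens5_words}.
Proof.
pose S := wspan 5 gens5_words.
have /allP S_closed : all (fun s => all (fun t => wadd s t \in S) S) S by vm_compute.
by move=> s t /S_closed/allP; apply.
Qed.

Definition decode5 (se : seq bool) : word :=
  nth (zero_word 5) (single_error_words 5)
      (index se [seq wsyndrome gens5_words s | s <- single_error_words 5]).

Lemma decode5_wsyndrome s :
  s \in single_error_words 5 -> decode5 (wsyndrome gens5_words s) = s.
Proof.
have /allP dec_syn :
  all (fun s => decode5 (wsyndrome gens5_words s) == s) (single_error_words 5) by vm_compute.
by move=> /dec_syn/eqP.
Qed.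

Lemma decode5P (e : {ffun 'I_4 -> bool}) :
  decode5 (codom e) \in single_error_words 5 /\
  wsyndrome gens5_words (decode5 (codom e)) = codom e.
Proof.
have /allP syn_dec : all (fun se => (decode5 se \in single_error_words 5) &&
                                    (wsyndrome gens5_words (decode5 se) == se))
                         (tuples [:: false; true] 4) by vm_compute.
have /syn_dec/andP[-> /eqP->] // : codom e \in tuples [:: false; true] 4.
by rewrite mem_tuples size_codom card_ord eqxx; apply/allP => -[].
Qed.

Definition err5 (e : {ffun 'I_4 -> bool}) : pauli 5 := (0, word_ffun 5 (decode5 (codom e))).

Lemma E5E g : (g \in E5) = (g.1 == 0) && (pword g.2 \in single_error_words 5).
Proof. exact: mem_single_errors. Qed.

Lemma pword_err5 e : pword (err5 e).2 = decode5 (codom e).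
Proof. by rewrite word_ffunK // (size_single_error_words (decode5P e).1). Qed.

Lemma err5P e : err5 e \in E5 /\ syndrome gens5 (err5 e) = e.
Proof.
split; first by rewrite E5E pword_err5 (decode5P e).1.
by apply: codom_ffun_inj; rewrite codom_syndrome gen_words5 pword_err5 (decode5P e).2.
Qed.

Lemma E5_err5 g : g \in E5 -> g = err5 (syndrome gens5 g).
Proof.
rewrite E5E => /andP[/eqP g1 gw].
rewrite /err5 codom_syndrome gen_words5 decode5_wsyndrome // pwordK.
by case: g g1 {gw} => k w /= ->.
Qed.

Lemma phi5E e : phi5 e = err5 e.
Proof.
rewrite /phi5; case: pickP => [g /andP[gE /eqP <-] | none] /=; first exact: E5_err5.
by have [eE eS] := err5P e; move: (none (err5 e)); rewrite eE eS eqxx.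
Qed.

Lemma card_E5 : #|E5| = 16%N.
Proof.
have -> : E5 = err5 @: [set: {ffun 'I_4 -> bool}].
  apply/setP => g; apply/idP/imsetP => [gE | [e _ ->]]; last exact: (err5P e).1.
  by exists (syndrome gens5 g); rewrite ?inE //; apply: E5_err5.
rewrite card_imset; last by apply: (can_inj (g := syndrome gens5)) => e; case: (err5P e).
by rewrite cardsT card_ffun card_bool card_ord.
Qed.

Lemma E5_syndrome_unique e : exists! g, g \in E5 /\ syndrome gens5 g = e.
Proof. by exists (err5 e); split=> [|g [gE <-]]; [exact: err5P | rewrite -E5_err5]. Qed.

Lemma fS5E t :
  fS gens5 phi5 t = fS_words 5 gens5_words (wspan 5 gens5_words) decode5 t.
Proof.
rewrite -gen_words5; apply: fS_wordsE => [|e]; last by rewrite phi5E pword_err5.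
by rewrite gen_words5; exact: wspan5_closed.
Qed.

Theorem mainTheorem2 :
  #|E5| = 16%N /\
  (forall e : {ffun 'I_4 -> bool}, exists! g, g \in E5 /\ syndrome gens5 g = e) /\
  fS gens5 phi5 0 = 1 /\ fS gens5 phi5 1 = 1 /\
  fS gens5 phi5 2 = 7%:R / 16%:R /\
  fS gens5 phi5 3 = 0 /\ fS gens5 phi5 4 = 0 /\ fS gens5 phi5 5 = 0.
Proof.
split; first exact: card_E5.
split; first exact: E5_syndrome_unique.
by rewrite !fS5E /fS_words unlock; repeat apply: conj; apply/eqP; vm_compute.
Qed.
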